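(* Let $G$ be an amenable group and let $A,B\subseteq G$ have positive Banach densities $d(A)=\alpha$ and $d(B)=\beta$. Then the product set $AB$ is piecewise $k$-syndetic with $k=\left\lfloor\frac{1}{\alpha\beta}\right\rfloor$; that is, there is $F\subseteq G$ with $|F|\le\frac1{\alpha\beta}$ such that $FAB$ is thick.
   Context: A finite $K\subseteq G$ is $(H,\varepsilon)$-invariant if $K\ne\emptyset$ and $|hK\triangle K|/|K|<\varepsilon$ for all $h\in H$; $G$ is amenable if such $K$ exist for every finite $H\subseteq G$ and $\varepsilon>0$. $d(A)$ is the supremum of all $\alpha$ such that for every finite $H$ and $\varepsilon>0$ there is an $(H,\varepsilon)$-invariant $K$ with $|A\cap K|/|K|\ge\alpha$. A set $T\subseteq G$ is thick if for every finite $H\subseteq G$ there is $x\in G$ with $Hx\subseteq T$. $S$ is piecewise $k$-syndetic if $FS$ is thick for some $F\subseteq G$ with $|F|\le k$. *)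

(* abstract (possibly infinite) group given by explicit operations;
   finite subsets are duplicate-free lists; densities are Stdlib reals. *)
From Stdlib Require Import Reals List.
Import ListNotations.
Open Scope R_scope.

Section Defs.
Context {G : Type} (mul : G -> G -> G) (one : G) (inv : G -> G).

Definition is_group : Prop :=
  (forall x y z, mul x (mul y z) = mul (mul x y) z) /\
  (forall x, mul one x = x) /\ (forall x, mul x one = x) /\
  (forall x, mul (inv x) x = one) /\ (forall x, mul x (inv x) = one).

Definition card_of (P : G -> Prop) (n : nat) : Prop :=
  exists l : list G, NoDup l /\ (forall x, In x l <-> P x) /\ length l = n.

Definition in_left_translate (h : G) (K : list G) (x : G) : Prop :=
  exists y, In y K /\ x = mul h y.

Definition invariant (H : list G) (eps : R) (K : list G) : Prop :=
  K <> [] /\ NoDup K /\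
  forall h, In h H -> exists n,
    card_of (fun x => (in_left_translate h K x /\ ~ In x K) \/
                      (In x K /\ ~ in_left_translate h K x)) n /\
    INR n / INR (length K) < eps.

Definition amenable : Prop :=
  forall (H : list G) (eps : R), 0 < eps -> exists K, invariant H eps K.

Definition density_witness (A : G -> Prop) (alpha : R) : Prop :=
  forall (H : list G) (eps : R), 0 < eps -> exists K, invariant H eps K /\
    exists n, card_of (fun x => A x /\ In x K) n /\ INR n / INR (length K) >= alpha.

Definition banach_density (A : G -> Prop) (alpha : R) : Prop :=
  is_lub (density_witness A) alpha.

Definition thick (T : G -> Prop) : Prop :=
  forall H : list G, exists x, forall h, In h H -> T (mul h x).

Definition left_prod (F : list G) (S : G -> Prop) (g : G) : Prop :=
  exists f s, In f F /\ S s /\ g = mul f s.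

Definition set_prod (A B : G -> Prop) (g : G) : Prop :=
  exists a b, A a /\ B b /\ g = mul a b.

Definition piecewise_syndetic (k : nat) (S : G -> Prop) : Prop :=
  exists F : list G, NoDup F /\ (length F <= k)%nat /\ thick (left_prod F S).

End Defs.

From Stdlib Require Import Reals List Lra Lia Psatz ClassicalEpsilon Classical.
Import ListNotations.
Open Scope R_scope.

(* For x in G the set A ∩ xB⁻¹ = {y ∈ A | y⁻¹x ∈ B} is nonempty exactly when x ∈ AB.
   Call a finite F an ab-packing if, for every precision (H, e), there are an
   (H, e)-invariant set K and a point x such that A ∩ xB⁻¹ fills a proportion
   ab - e of K and its translates f(A ∩ xB⁻¹), f ∈ F, are pairwise disjoint in K.
   1. The empty list is an alpha·beta-packing: averaging over a set M that is invariant
      under K⁻¹ finds x with A ∩ xB⁻¹ of proportion about alpha·beta in K.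
   2. Disjointness forces |F|·ab <= 1, so packings have at most ⌊1/(alpha beta)⌋ elements.
   3. A packing F of maximal size is covering: if gx ∉ F·AB, then g(A ∩ xB⁻¹) is disjoint
      from the other translates, so g :: F would still be a packing. Choosing precise
      witnesses for all h in a finite H thus gives Hx ⊆ F·AB, i.e. F·AB is thick. *)

Definition decide (P : Prop) : bool :=
  if excluded_middle_informative P then true else false.

Lemma decide_true (P : Prop) : decide P = true <-> P.
Proof.
  unfold decide; destruct (excluded_middle_informative P); split; intro; auto; easy.
Qed.

Lemma decide_false (P : Prop) : decide P = false <-> ~ P.
Proof.
  unfold decide; destruct (excluded_middle_informative P); split; intro; auto; easy.
Qed.

Section Counting.
Context {T : Type}.

Definition count (P : T -> Prop) (l : list T) : nat :=
  length (filter (fun x => decide (P x)) l).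

Lemma count_cons (P : T -> Prop) x l :
  count P (x :: l) = ((if decide (P x) then 1 else 0) + count P l)%nat.
Proof. unfold count; simpl; destruct (decide (P x)); reflexivity. Qed.

Lemma count_le_length (P : T -> Prop) l : (count P l <= length l)%nat.
Proof. apply filter_length_le. Qed.

Lemma count_mono (P Q : T -> Prop) l :
  (forall x, In x l -> P x -> Q x) -> (count P l <= count Q l)%nat.
Proof.
  induction l as [|a l IH]; intro HPQ; [unfold count; simpl; lia|].
  rewrite !count_cons.
  assert (IH' : (count P l <= count Q l)%nat) by (apply IH; intros; apply HPQ; simpl; auto).
  destruct (decide (P a)) eqn:EP; destruct (decide (Q a)) eqn:EQ; try lia.
  apply (proj1 (decide_true _)) in EP; apply (proj1 (decide_false _)) in EQ.
  exfalso; apply EQ, HPQ; [left; reflexivity|exact EP].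
Qed.

Lemma count_split (P Q : T -> Prop) l :
  (count P l <= count (fun x => P x /\ Q x) l + count (fun x => ~ Q x) l)%nat.
Proof.
  apply (Nat.le_trans _ (count (fun x => (P x /\ Q x) \/ ~ Q x) l)).
  - apply count_mono; intros x _ HP; destruct (classic (Q x)); auto.
  - induction l as [|a l IH]; [unfold count; simpl; lia|].
    rewrite !count_cons.
    destruct (decide (_ \/ _)) eqn:E; [|lia].
    apply (proj1 (decide_true _)) in E.
    destruct E as [E|E]; apply (proj2 (decide_true _)) in E; rewrite E;
      [|destruct (decide (P a /\ Q a))]; lia.
Qed.

Lemma count_pos (P : T -> Prop) l : (0 < count P l)%nat -> exists x, In x l /\ P x.
Proof.
  unfold count; intro Hpos.
  destruct (filter (fun x => decide (P x)) l) as [|x r] eqn:E; [simpl in Hpos; lia|].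
  assert (Hx : In x (filter (fun x => decide (P x)) l)) by (rewrite E; simpl; auto).
  apply filter_In in Hx; destruct Hx as [Hx HP].
  exists x; split; [exact Hx|apply decide_true, HP].
Qed.

Lemma count_inj (P Q : T -> Prop) (l l' : list T) (phi : T -> T) :
  NoDup l -> (forall x y, phi x = phi y -> x = y) ->
  (forall x, In x l -> P x -> In (phi x) l' /\ Q (phi x)) ->
  (count P l <= count Q l')%nat.
Proof.
  intros Hnd Hinj Hmap. unfold count.
  rewrite <- (length_map phi).
  apply NoDup_incl_length.
  - apply NoDup_map_NoDup_ForallPairs; [intros a b _ _; apply Hinj|].
    apply NoDup_filter; exact Hnd.
  - intros y Hy. apply in_map_iff in Hy; destruct Hy as [z [<- Hz]].
    apply filter_In in Hz; destruct Hz as [Hz HPz]; apply (proj1 (decide_true _)) in HPz.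
    destruct (Hmap z Hz HPz). apply filter_In; split; [|apply decide_true]; auto.
Qed.

Lemma count_le_1 (P : T -> Prop) (l : list T) :
  NoDup l -> (forall f f', In f l -> In f' l -> f <> f' -> P f -> P f' -> False) ->
  (count P l <= 1)%nat.
Proof.
  induction l as [|a l IH]; intros Hnd Hunique; [unfold count; simpl; lia|].
  inversion Hnd as [|? ? Ha Hnd']; subst. rewrite count_cons.
  destruct (decide (P a)) eqn:E.
  - apply (proj1 (decide_true _)) in E.
    assert (Hnone : count P l = 0%nat).
    { destruct (Nat.eq_dec (count P l) 0) as [|Hne]; [assumption|].
      destruct (count_pos P l) as [x [Hx HPx]]; [lia|].
      exfalso; apply (Hunique a x); simpl; auto. intros ->; contradiction. }
    lia.
  - assert (count P l <= 1)%nat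
      by (apply IH; auto; intros; apply (Hunique f f'); simpl; auto).
    lia.
Qed.

Lemma count_le_card (P Q : T -> Prop) (K : list T) n :
  card_of P n -> NoDup K -> (forall x, In x K -> Q x -> P x) -> (count Q K <= n)%nat.
Proof.
  intros [l [Hnd [Hiff Hlen]]] HK HQP. subst n. unfold count.
  apply NoDup_incl_length; [apply NoDup_filter; exact HK|].
  intros y Hy. apply filter_In in Hy; destruct Hy as [Hy HQ].
  apply (proj1 (decide_true _)) in HQ. apply Hiff; auto.
Qed.

Lemma card_le_count (P Q : T -> Prop) (K : list T) n :
  card_of P n -> (forall x, P x -> In x K /\ Q x) -> (n <= count Q K)%nat.
Proof.
  intros [l [Hnd [Hiff Hlen]]] HPQ. subst n. unfold count.
  apply NoDup_incl_length; [exact Hnd|].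
  intros y Hy. apply Hiff, HPQ in Hy. apply filter_In; split; [|apply decide_true]; tauto.
Qed.

Fixpoint sum_over (l : list T) (v : T -> nat) : nat :=
  match l with [] => 0%nat | x :: t => (v x + sum_over t v)%nat end.

Lemma sum_over_ext (l : list T) u v :
  (forall x, In x l -> u x = v x) -> sum_over l u = sum_over l v.
Proof.
  induction l as [|a l IH]; intro Huv; simpl; [reflexivity|].
  f_equal; [apply Huv; simpl; auto|apply IH; intros; apply Huv; simpl; auto].
Qed.

Lemma count_as_sum (P : T -> Prop) l :
  count P l = sum_over l (fun x => if decide (P x) then 1%nat else 0%nat).
Proof. induction l; simpl; [reflexivity|]. rewrite count_cons, IHl; reflexivity. Qed.

Lemma sum_over_swap (l1 l2 : list T) (w : T -> T -> nat) :
  sum_over l1 (fun a => sum_over l2 (fun b => w a b)) =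
  sum_over l2 (fun b => sum_over l1 (fun a => w a b)).
Proof.
  induction l1 as [|a l1 IH]; simpl.
  - induction l2; simpl; auto.
  - rewrite IH. clear IH. induction l2 as [|b l2 IH]; simpl; [reflexivity|].
    rewrite <- IH; lia.
Qed.

Lemma count_swap (Rel : T -> T -> Prop) (l1 l2 : list T) :
  sum_over l1 (fun a => count (Rel a) l2) = sum_over l2 (fun b => count (fun a => Rel a b) l1).
Proof.
  rewrite (sum_over_ext l1 _ (fun a => sum_over l2 (fun b => if decide (Rel a b) then 1%nat else 0%nat)))
    by (intros; apply count_as_sum).
  rewrite sum_over_swap. apply sum_over_ext. intros; symmetry; apply count_as_sum.
Qed.

Lemma sum_over_ge_count (l : list T) (v : T -> nat) (P : T -> Prop) (c : R) :
  0 <= c -> (forall x, In x l -> P x -> c <= INR (v x)) ->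
  INR (count P l) * c <= INR (sum_over l v).
Proof.
  intros Hc. induction l as [|a l IH]; intro Hv; simpl; [unfold count; simpl; lra|].
  rewrite count_cons, !plus_INR.
  assert (IH' : INR (count P l) * c <= INR (sum_over l v)) by (apply IH; intros; apply Hv; simpl; auto).
  destruct (decide (P a)) eqn:E; simpl INR.
  - apply (proj1 (decide_true _)) in E. assert (c <= INR (v a)) by (apply Hv; simpl; auto). lra.
  - pose proof (pos_INR (v a)). lra.
Qed.

Lemma sum_over_ge (l : list T) (v : T -> nat) (c : R) :
  (forall x, In x l -> c <= INR (v x)) -> INR (length l) * c <= INR (sum_over l v).
Proof.
  induction l as [|a l IH]; intro Hv; cbn [sum_over length]; [simpl; lra|].
  rewrite plus_INR, S_INR.
  assert (c <= INR (v a)) by (apply Hv; simpl; auto).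
  assert (INR (length l) * c <= INR (sum_over l v)) by (apply IH; intros; apply Hv; simpl; auto).
  lra.
Qed.

Lemma sum_over_le_length (l : list T) (v : T -> nat) :
  (forall x, In x l -> (v x <= 1)%nat) -> (sum_over l v <= length l)%nat.
Proof.
  induction l as [|a l IH]; intro Hv; simpl; [lia|].
  assert (v a <= 1)%nat by (apply Hv; simpl; auto).
  assert (sum_over l v <= length l)%nat by (apply IH; intros; apply Hv; simpl; auto).
  lia.
Qed.

Lemma exists_above_average (l : list T) (v : T -> nat) (c : R) :
  l <> [] -> INR (length l) * c <= INR (sum_over l v) -> exists x, In x l /\ c <= INR (v x).
Proof.
  intros Hne Hsum. apply NNPP; intro Hnone.
  assert (Hsmall : forall x, In x l -> INR (v x) < c).
  { intros x Hx. apply Rnot_le_lt; intro Hge; apply Hnone; eauto. }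
  destruct l as [|a l]; [contradiction|].
  assert (Hrest : INR (sum_over l v) <= INR (length l) * c).
  { clear Hsum Hnone. induction l as [|b l IH]; cbn [sum_over length]; [simpl; lra|].
    rewrite plus_INR, S_INR.
    assert (INR (v b) < c) by (apply Hsmall; simpl; auto).
    assert (INR (sum_over l v) <= INR (length l) * c)
      by (apply IH; [discriminate|intros x [->|Hx]; apply Hsmall; simpl; auto]).
    lra. }
  assert (INR (v a) < c) by (apply Hsmall; simpl; auto).
  cbn [sum_over length] in Hsum. rewrite plus_INR, S_INR in Hsum. lra.
Qed.

End Counting.

Section GroupFacts.
Context {G : Type} (mul : G -> G -> G) (one : G) (inv : G -> G).
Hypothesis Hgrp : is_group mul one inv.

Lemma mul_inv_cancel_l a z : mul (inv a) (mul a z) = z.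
Proof. destruct Hgrp as [Hassoc [Hl1 [_ [Hlinv _]]]]. rewrite Hassoc, Hlinv, Hl1; reflexivity. Qed.

Lemma mul_cancel_inv_l a z : mul a (mul (inv a) z) = z.
Proof. destruct Hgrp as [Hassoc [Hl1 [_ [_ Hrinv]]]]. rewrite Hassoc, Hrinv, Hl1; reflexivity. Qed.

Lemma mul_left_inj a y y' : mul a y = mul a y' -> y = y'.
Proof. intro E. rewrite <- (mul_inv_cancel_l a y), <- (mul_inv_cancel_l a y'), E; reflexivity. Qed.

Lemma mul_regroup g f y y' x :
  mul g y = mul f y' -> mul g x = mul f (mul y' (mul (inv y) x)).
Proof.
  intro E. destruct Hgrp as [Hassoc _].
  rewrite Hassoc, <- E, <- Hassoc, mul_cancel_inv_l; reflexivity.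
Qed.

End GroupFacts.

Section Invariance.
Context {G : Type} (mul : G -> G -> G).

Lemma invariant_mono H H' e e' K :
  invariant mul H e K -> incl H' H -> e <= e' -> invariant mul H' e' K.
Proof.
  intros [Hne [Hnd Hinv]] Hincl He. split; [|split]; auto.
  intros h Hh. destruct (Hinv h (Hincl h Hh)) as [n [Hc Hlt]]. exists n; split; [exact Hc|lra].
Qed.

Lemma invariant_length_pos H e K : invariant mul H e K -> 0 < INR (length K).
Proof. intros [Hne _]. destruct K; [contradiction|]. apply lt_0_INR; simpl; lia. Qed.

Lemma invariant_escape H e K h : invariant mul H e K -> In h H ->
  INR (count (fun z => ~ in_left_translate mul h K z) K) < e * INR (length K).
Proof.
  intros Hinv Hh. pose proof (invariant_length_pos _ _ _ Hinv) as Hpos.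
  destruct Hinv as [_ [Hnd Hsym]]. destruct (Hsym h Hh) as [n [Hc Hlt]].
  assert (Hle : (count (fun z => ~ in_left_translate mul h K z) K <= n)%nat).
  { eapply count_le_card; eauto. intros x Hx Hnx. right; auto. }
  apply le_INR in Hle. unfold Rdiv in Hlt.
  apply (Rmult_lt_compat_r (INR (length K))) in Hlt; [|exact Hpos].
  rewrite Rmult_assoc, Rinv_l in Hlt; lra.
Qed.

Variables (one : G) (inv : G -> G).
Hypothesis Hgrp : is_group mul one inv.

Lemma translate_count H e K a (P Q : G -> Prop) :
  invariant mul H e K -> In (inv a) H -> (forall z, P z -> Q (mul a z)) ->
  INR (count P K) - e * INR (length K) <= INR (count Q K).
Proof.
  intros Hinv Ha HPQ.
  assert (Hnd : NoDup K) by (destruct Hinv as [_ [Hnd _]]; exact Hnd).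
  assert (Hmoved : (count (fun z => P z /\ In (mul a z) K) K <= count Q K)%nat).
  { apply (count_inj _ _ _ _ (mul a)); [exact Hnd|apply (mul_left_inj _ _ _ Hgrp)|].
    intros z _ [HP Hin]; auto. }
  assert (Hlost : (count (fun z => ~ In (mul a z) K) K <=
                   count (fun z => ~ in_left_translate mul (inv a) K z) K)%nat).
  { apply count_mono. intros z _ Hout [w [Hw ->]]. apply Hout.
    rewrite (mul_cancel_inv_l _ _ _ Hgrp); exact Hw. }
  pose proof (count_split P (fun z => In (mul a z) K) K) as Hsplit.
  pose proof (invariant_escape _ _ _ _ Hinv Ha) as Hesc.
  apply le_INR in Hmoved, Hlost, Hsplit. rewrite plus_INR in Hsplit. lra.
Qed.

End Invariance.

Section Density.
Context {G : Type} (mul : G -> G -> G) (A : G -> Prop) (alpha : R).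
Hypothesis HdA : banach_density mul A alpha.

Lemma density_approx H d : 0 < d ->
  exists K, invariant mul H d K /\ (alpha - d) * INR (length K) <= INR (count A K).
Proof.
  intros Hd. destruct HdA as [_ Hleast].
  assert (Hw : exists w, density_witness mul A w /\ alpha - d < w).
  { apply NNPP; intro Hnone.
    assert (Hub : is_upper_bound (density_witness mul A) (alpha - d)).
    { intros w Hw. apply Rnot_lt_le; intro Hlt; apply Hnone; eauto. }
    specialize (Hleast _ Hub); lra. }
  destruct Hw as [w [Hw Hlt]].
  destruct (Hw H d Hd) as [K [Hinv [n [Hc Hratio]]]].
  exists K; split; [exact Hinv|].
  pose proof (invariant_length_pos _ _ _ _ Hinv) as Hpos.
  assert (Hle : (n <= count A K)%nat) by (eapply card_le_count; eauto; intros x [Hx HK]; auto).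
  apply le_INR in Hle. apply Rge_le in Hratio. unfold Rdiv in Hratio.
  apply (Rmult_le_compat_r (INR (length K))) in Hratio; [|lra].
  rewrite Rmult_assoc, Rinv_l in Hratio; nra.
Qed.

Lemma density_le_1 : alpha <= 1.
Proof.
  apply Rnot_lt_le; intro Hgt.
  destruct (density_approx [] ((alpha - 1) / 2)) as [K [Hinv Hcount]]; [lra|].
  pose proof (invariant_length_pos _ _ _ _ Hinv).
  pose proof (le_INR _ _ (count_le_length A K)). nra.
Qed.

End Density.

Section Packing.
Context {G : Type} (mul : G -> G -> G) (one : G) (inv : G -> G).
Hypothesis Hgrp : is_group mul one inv.
Variables (A B : G -> Prop).

(* y ∈ A and y⁻¹x ∈ B, i.e. y ∈ A ∩ xB⁻¹: y is the A-factor of a factorization of x in AB. *)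
Definition splits (x y : G) : Prop := A y /\ B (mul (inv y) x).

Definition shifted_splits (f x w : G) : Prop := exists y, splits x y /\ w = mul f y.

Definition separated (F K : list G) (x : G) : Prop :=
  forall f f' w, In f F -> In f' F -> f <> f' -> In w K ->
    shifted_splits f x w -> shifted_splits f' x w -> False.

Variable ab : R.

Definition witness (F H : list G) (e : R) (K : list G) (x : G) : Prop :=
  invariant mul H e K /\ (ab - e) * INR (length K) <= INR (count (splits x) K) /\
  separated F K x.

Definition packing (F : list G) : Prop :=
  forall H e, 0 < e -> exists K x, witness F H e K x.

Lemma witness_mono F H H' e e' K x :
  witness F H e K x -> incl H' H -> e <= e' -> witness F H' e' K x.
Proof.
  intros [Hinv [Hcount Hsep]] Hincl He.
  pose proof (invariant_length_pos _ _ _ _ Hinv).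
  split; [eapply invariant_mono; eauto|split; [nra|exact Hsep]].
Qed.

Lemma witness_splits F H e K x : e < ab -> witness F H e K x -> exists y, splits x y.
Proof.
  intros Heab [Hinv [Hcount _]]. pose proof (invariant_length_pos _ _ _ _ Hinv).
  destruct (count_pos (splits x) K) as [y [_ Hy]]; [|exists y; exact Hy].
  apply INR_lt; simpl; nra.
Qed.

Lemma common_split_point K M a b d :
  invariant mul (map inv K) d M -> 0 <= a -> 0 <= b - d ->
  a * INR (length K) <= INR (count A K) -> b * INR (length M) <= INR (count B M) ->
  exists x, a * (b - d) * INR (length K) <= INR (count (splits x) K).
Proof.
  intros HM Ha Hbd HA HB.
  pose proof (invariant_length_pos _ _ _ _ HM) as HMpos.
  assert (Hfiber : forall y, In y K -> A y ->
            (b - d) * INR (length M) <= INR (count (fun x => splits x y) M)).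
  { intros y Hy HAy.
    assert (Htr := translate_count mul one inv Hgrp _ _ _ y B (fun x => splits x y) HM
                     (in_map inv K y Hy)).
    enough (INR (count B M) - d * INR (length M) <= INR (count (fun x => splits x y) M)) by lra.
    apply Htr. intros z HBz. split; [exact HAy|].
    rewrite (mul_inv_cancel_l _ _ _ Hgrp); exact HBz. }
  assert (Hdouble : INR (length M) * (a * (b - d) * INR (length K)) <=
                    INR (sum_over M (fun x => count (splits x) K))).
  { rewrite (count_swap splits M K).
    eapply Rle_trans; [|apply sum_over_ge_count; [|exact Hfiber]; nra].
    assert (0 <= (b - d) * INR (length M)) by nra. nra. }
  destruct (exists_above_average M _ _ ltac:(destruct HM; assumption) Hdouble) as [x [_ Hx]].
  exists x; exact Hx.
Qed.

Lemma packing_nil alpha beta :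
  0 < alpha -> 0 < beta -> banach_density mul A alpha -> banach_density mul B beta ->
  ab <= alpha * beta -> packing [].
Proof.
  intros Ha Hb HdA HdB Hab H e He.
  pose proof (density_le_1 mul A alpha HdA). pose proof (density_le_1 mul B beta HdB).
  set (d := Rmin (e / 3) (Rmin alpha (beta / 2))).
  assert (Hd : 0 < d) by (unfold d; repeat apply Rmin_glb_lt; lra).
  assert (Hde : d <= e / 3) by apply Rmin_l.
  assert (Hda : d <= alpha) by (eapply Rle_trans; [apply Rmin_r|apply Rmin_l]).
  assert (Hdb : d <= beta / 2) by (eapply Rle_trans; [apply Rmin_r|apply Rmin_r]).
  destruct (density_approx mul A alpha HdA H d Hd) as [K [HK HAK]].
  destruct (density_approx mul B beta HdB (map inv K) d Hd) as [M [HM HBM]].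
  destruct (common_split_point K M (alpha - d) (beta - d) d HM) as [x Hx]; try lra; auto.
  pose proof (invariant_length_pos _ _ _ _ HK).
  exists K, x. split; [eapply invariant_mono; eauto; [apply incl_refl|lra]|split].
  - eapply Rle_trans; [|exact Hx]. apply Rmult_le_compat_r; [lra|nra].
  - intros f f' w [].
Qed.

(* Packing bound: the disjoint translates f(A ∩ xB⁻¹), f ∈ F, each of density ≈ ab,
   fit in one invariant set, so |F| ab <= 1. *)
Lemma packing_size_bound F :
  NoDup F -> packing F -> INR (length F) * ab <= 1.
Proof.
  intros Hnd HF. apply Rle_plus_epsilon; intros eps Heps.
  set (m := INR (length F)). assert (Hm : 0 <= m) by apply pos_INR.
  set (e := eps / (2 * (m + 1))).
  assert (He : 0 < e) by (unfold e; apply Rdiv_lt_0_compat; lra).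
  assert (Hme : 2 * m * e <= eps).
  { unfold e. apply (Rmult_le_reg_r (2 * (m + 1))); [lra|].
    field_simplify; [nra|lra]. }
  destruct (HF (map inv F) e He) as [K [x [HK [Hcount Hsep]]]].
  pose proof (invariant_length_pos _ _ _ _ HK) as HKpos.
  assert (HKnd : NoDup K) by (destruct HK as [_ [HKnd _]]; exact HKnd).
  assert (Htranslate : forall f, In f F ->
            (ab - 2 * e) * INR (length K) <= INR (count (fun w => shifted_splits f x w) K)).
  { intros f Hf.
    enough (INR (count (splits x) K) - e * INR (length K) <=
            INR (count (fun w => shifted_splits f x w) K)) by lra.
    apply (translate_count mul one inv Hgrp (map inv F) e K f); [exact HK|apply in_map, Hf|].
    intros y Hy. exists y; split; [exact Hy|reflexivity]. }
  assert (Hlow := sum_over_ge F _ _ Htranslate).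
  rewrite (count_swap (fun f w => shifted_splits f x w) F K) in Hlow.
  assert (Hup : (sum_over K (fun w => count (fun f => shifted_splits f x w) F) <= length K)%nat).
  { apply sum_over_le_length. intros w Hw. apply count_le_1; [exact Hnd|].
    intros f f' Hf Hf' Hne H1 H2. eapply Hsep; eauto. }
  apply le_INR in Hup. fold m in Hlow.
  assert (m * (ab - 2 * e) <= 1) by (apply (Rmult_le_reg_r (INR (length K))); nra).
  nra.
Qed.

Lemma translate_meets_in_left_prod F g f' x y y' :
  In f' F -> splits x y -> A y' -> mul g y = mul f' y' ->
  left_prod mul F (set_prod mul A B) (mul g x).
Proof.
  intros Hf' [_ HBy] HAy' E. exists f', (mul y' (mul (inv y) x)).
  split; [exact Hf'|split].
  - exists y', (mul (inv y) x); auto.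
  - apply (mul_regroup _ _ _ Hgrp); exact E.
Qed.

Lemma separated_cons F K x g :
  separated F K x -> ~ left_prod mul F (set_prod mul A B) (mul g x) ->
  separated (g :: F) K x.
Proof.
  intros Hsep Hout f f' w [<-|Hf] [<-|Hf'] Hne Hw [y [Hy Ew]] [y' [Hy' Ew']].
  - contradiction.
  - apply Hout, (translate_meets_in_left_prod F g f' x y y'); [exact Hf'|exact Hy|apply Hy'|].
    congruence.
  - apply Hout, (translate_meets_in_left_prod F g f x y' y); [exact Hf|exact Hy'|apply Hy|].
    congruence.
  - apply (Hsep f f' w Hf Hf' Hne Hw); [exists y|exists y']; auto.
Qed.

Lemma maximal_packing_covers F :
  0 < ab -> (forall g, ~ In g F -> ~ packing (g :: F)) ->
  forall H, exists Hs e, 0 < e /\ e < ab /\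
    forall K x, witness F Hs e K x ->
      forall h, In h H -> left_prod mul F (set_prod mul A B) (mul h x).
Proof.
  intros Hab Hmax H. induction H as [|g H IH].
  { exists [], (ab / 2). split; [lra|split; [lra|]]. intros K x _ h []. }
  destruct IH as [Hs [e [He [Heab Hcover]]]].
  destruct (classic (In g F)) as [HgF|HgF].
  - exists Hs, e. split; [exact He|split; [exact Heab|]].
    intros K x Hw h [<-|Hh]; [|apply (Hcover K x Hw h Hh)].
    destruct (witness_splits F Hs e K x Heab Hw) as [y Hy].
    apply (translate_meets_in_left_prod F g g x y y); [exact HgF|exact Hy|apply Hy|reflexivity].
  - assert (Hbad : exists Hg eg, 0 < eg /\ forall K x, ~ witness (g :: F) Hg eg K x).
    { apply NNPP; intro Hnone. apply (Hmax g HgF). intros Hg eg Heg.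
      apply NNPP; intro Hno. apply Hnone. exists Hg, eg. split; [exact Heg|].
      intros K x Hw. apply Hno. eauto. }
    destruct Hbad as [Hg [eg [Heg Hbad]]].
    exists (Hg ++ Hs), (Rmin eg e).
    assert (Hmin1 : Rmin eg e <= eg) by apply Rmin_l.
    assert (Hmin2 : Rmin eg e <= e) by apply Rmin_r.
    split; [apply Rmin_glb_lt; lra|split; [lra|]].
    intros K x Hw h [<-|Hh].
    + apply NNPP; intro Hout. apply (Hbad K x).
      destruct Hw as [Hinv [Hcount Hsep]].
      apply (witness_mono (g :: F) (Hg ++ Hs) Hg (Rmin eg e) eg); [|apply incl_appl, incl_refl|exact Hmin1].
      split; [exact Hinv|split; [exact Hcount|apply separated_cons; assumption]].
    + apply (Hcover K x); [|exact Hh].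
      apply (witness_mono F (Hg ++ Hs) Hs (Rmin eg e) e); [exact Hw|apply incl_appr, incl_refl|exact Hmin2].
Qed.

Lemma maximal_packing_thick F :
  0 < ab -> packing F -> (forall g, ~ In g F -> ~ packing (g :: F)) ->
  thick mul (left_prod mul F (set_prod mul A B)).
Proof.
  intros Hab HF Hmax H.
  destruct (maximal_packing_covers F Hab Hmax H) as [Hs [e [He [_ Hcover]]]].
  destruct (HF Hs e He) as [K [x Hw]].
  exists x. exact (Hcover K x Hw).
Qed.

End Packing.

Lemma le_floor (m : nat) (r : R) : INR m <= r -> (m <= Z.to_nat (Int_part r))%nat.
Proof.
  intros Hm. destruct (base_Int_part r) as [_ Hfloor].
  assert (Hlt : (Z.of_nat m - 1 < Int_part r)%Z).
  { apply lt_IZR. rewrite minus_IZR, <- INR_IZR_INZ. lra. }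
  lia.
Qed.

Lemma bounded_max (P : nat -> Prop) (bound : nat) :
  P 0%nat -> (forall n, P n -> (n <= bound)%nat) ->
  exists n, P n /\ forall k, P k -> (k <= n)%nat.
Proof.
  revert P. induction bound as [|bound IH]; intros P H0 Hbound.
  - exists 0%nat; split; [exact H0|exact Hbound].
  - destruct (classic (P (S bound))) as [HS|HS].
    + exists (S bound); split; [exact HS|exact Hbound].
    + apply IH; [exact H0|]. intros n Hn. specialize (Hbound n Hn).
      destruct (Nat.eq_dec n (S bound)) as [->|]; [contradiction|lia].
Qed.

Theorem mainTheorem13 (G : Type) (mul : G -> G -> G) (one : G) (inv : G -> G)
  (Hgrp : is_group mul one inv) (Hamen : amenable mul)
  (A B : G -> Prop) (alpha beta : R)
  (Ha : 0 < alpha) (Hb : 0 < beta)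
  (HdA : banach_density mul A alpha) (HdB : banach_density mul B beta) :
  piecewise_syndetic mul (Z.to_nat (Int_part (1 / (alpha * beta)))) (set_prod mul A B) /\
  exists F : list G, NoDup F /\ INR (length F) <= 1 / (alpha * beta) /\
    thick mul (left_prod mul F (set_prod mul A B)).
Proof.
  set (ab := alpha * beta). assert (Hab : 0 < ab) by (unfold ab; nra).
  set (is_packing_size n := exists F, NoDup F /\ length F = n /\ packing mul inv A B ab F).
  assert (Hsize : forall F, NoDup F -> packing mul inv A B ab F -> INR (length F) <= 1 / ab).
  { intros F Hnd HF. pose proof (packing_size_bound mul one inv Hgrp A B ab F Hnd HF).
    unfold Rdiv. rewrite Rmult_1_l. apply (Rmult_le_reg_r ab); [exact Hab|]. rewrite Rinv_l; lra. }
  destruct (bounded_max is_packing_size (Z.to_nat (Int_part (1 / ab))))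
    as [n [[F [Hnd [Hlen HF]]] Hmax]].
  - exists []. split; [constructor|split; [reflexivity|]].
    apply (packing_nil mul one inv Hgrp A B ab alpha beta); auto; apply Rle_refl.
  - intros k [F [Hnd [<- HF]]]. apply le_floor, Hsize; assumption.
  - assert (Hthick : thick mul (left_prod mul F (set_prod mul A B))).
    { apply (maximal_packing_thick mul one inv Hgrp A B ab F Hab HF).
      intros g HgF Hext.
      assert (Hbig : is_packing_size (S n))
        by (exists (g :: F); split; [constructor; assumption|split; [simpl; congruence|exact Hext]]).
      specialize (Hmax _ Hbig). lia. }
    assert (HFsize : INR (length F) <= 1 / ab) by (apply Hsize; assumption).
    split.
    + exists F. split; [exact Hnd|split; [apply le_floor, HFsize|exact Hthick]].
    + exists F. split; [exact Hnd|split; [exact HFsize|exact Hthick]].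
Qed.
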